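(* Any algorithm that estimates the maximum path cover size of an $n$-vertex graph within a constant multiplicative factor requires $\Omega(n^2)$ queries in the adjacency matrix model.
   Context: A path cover is a collection of vertex-disjoint simple paths; its size is the total number of edges, and the maximum path cover size is the maximum over all path covers. Estimating within a constant multiplicative factor $\gamma\in(0,1]$ means outputting $\tilde{\rho}$ with $\gamma\rho\le\tilde{\rho}\le\rho$. In the adjacency matrix model the algorithm may query, for any pair of vertices, whether they are adjacent. *)

From HB Require Import structures.
From mathcomp Require Import all_boot all_order all_algebra.
Set Implicit Arguments. Unset Strict Implicit. Unset Printing Implicit Defensive.
Import Order.TTheory GRing.Theory Num.Theory.

Definition simple_graph (n : nat) (G : rel 'I_n) : Prop :=
  symmetric G /\ irreflexive G.

Definition simple_path (n : nat) (G : rel 'I_n) (p : seq 'I_n) : bool :=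
  if p is x :: s then path G x s && uniq p else false.

Definition path_cover (n : nat) (G : rel 'I_n) (P : seq (seq 'I_n)) : bool :=
  all (simple_path G) P && uniq (flatten P).

Definition pc_size (n : nat) (P : seq (seq 'I_n)) : nat :=
  \sum_(p <- P) (size p).-1.

Definition is_max_pc_size (n : nat) (G : rel 'I_n) (rho : nat) : Prop :=
  (exists P, path_cover G P /\ pc_size P = rho) /\
  (forall P, path_cover G P -> (pc_size P <= rho)%N).

(* Deterministic adaptive algorithms in the adjacency matrix model:
   decision trees whose internal nodes query whether u and v are adjacent,
   and whose leaves output an estimate. *)
Inductive dtree (R : Type) (n : nat) : Type :=
| Leaf : R -> dtree R n
| Query : 'I_n -> 'I_n -> dtree R n -> dtree R n -> dtree R n.

Fixpoint run (R : Type) (n : nat) (G : rel 'I_n) (t : dtree R n) : R :=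
  match t with
  | Leaf r => r
  | Query u v t1 t2 => if G u v then run G t1 else run G t2
  end.

Fixpoint num_queries (R : Type) (n : nat) (G : rel 'I_n) (t : dtree R n) : nat :=
  match t with
  | Leaf _ => 0
  | Query u v t1 t2 => (if G u v then num_queries G t1 else num_queries G t2).+1
  end.

Definition good_estimate (R : realFieldType) (n : nat) (gamma : R)
  (G : rel 'I_n) (r : R) : Prop :=
  forall rho, is_max_pc_size G rho -> (gamma * rho%:R <= r)%R /\ (r <= rho%:R)%R.

(* A randomized algorithm: a probability distribution p over a finite family
   T of deterministic decision trees. *)
Definition distribution (R : realFieldType) (I : finType) (p : I -> R) : Prop :=
  (forall i, (0 <= p i)%R) /\ (\sum_i p i = 1)%R.

Definition succeeds_with_prob (R : realFieldType) (n : nat) (gamma q : R)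
  (I : finType) (T : I -> dtree R n) (p : I -> R) (G : rel 'I_n) : Prop :=
  exists S : {set I},
    (forall i, i \in S -> good_estimate gamma G (run G (T i))) /\
    (q <= \sum_(i in S) p i)%R.

From HB Require Import structures.
From mathcomp Require Import all_boot all_order all_algebra.
From mathcomp Require Import lra zify.
From Stdlib Require Import Classical.
Import Order.TTheory GRing.Theory Num.Theory.
Set Implicit Arguments. Unset Strict Implicit. Unset Printing Implicit Defensive.

(* A decision tree that never asks about the pair {u, v} on the empty graph
   runs identically on the empty graph, whose maximum path cover size is 0, and
   on the graph whose only edge is uv, whose maximum path cover size is 1; so it
   cannot be a gamma-estimate on both.  Hence every ordered pair of distinct
   vertices is asked about, on the empty graph, by random choices of mass at
   least 2/3 + 2/3 - 1 = 1/3.  Averaging over the n^2 - n such pairs, some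
   random choice asks about at least (n^2 - n)/3 of them, each query covering
   two ordered pairs, hence makes at least n^2/12 queries on the empty graph. *)

Lemma bounded_ex_max (Q : nat -> Prop) (B : nat) :
  (exists k, Q k) -> (forall k, Q k -> (k <= B)%N) ->
  exists m, Q m /\ forall k, Q k -> (k <= m)%N.
Proof.
elim: B => [|B IH] [k Qk] leB.
  by exists k; split=> // j /leB; move: (leB k Qk); lia.
have [QB | nQB] := classic (Q B.+1); first by exists B.+1.
apply: IH; first by exists k.
move=> j Qj; have := leB j Qj; rewrite leq_eqVlt => /orP[/eqP Ej | //].
by rewrite Ej in Qj.
Qed.

Lemma pc_size_le_flatten n (P : seq (seq 'I_n)) : (pc_size P <= size (flatten P))%N.
Proof.
rewrite /pc_size; elim: P => [|p P IH]; first by rewrite big_nil.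
by rewrite big_cons size_cat leq_add // leq_pred.
Qed.

Lemma path_cover_size_le n (G : rel 'I_n) P : path_cover G P -> (pc_size P <= n)%N.
Proof.
case/andP=> _ /card_uniqP uniqP; apply: leq_trans (pc_size_le_flatten P) _.
by rewrite -uniqP -[leqRHS]card_ord max_card.
Qed.

Lemma max_pc_size_exists n (G : rel 'I_n) : exists rho, is_max_pc_size G rho.
Proof.
have [|k Gk|m [[P [PG <-]] maxP]] :=
  @bounded_ex_max (fun k => exists P, path_cover G P /\ pc_size P = k) n.
- by exists 0%N, [::]; rewrite /pc_size big_nil.
- by case: Gk => P [PG <-]; exact: path_cover_size_le PG.
by exists (pc_size P); split; [exists P | move=> Q QG; apply: maxP; exists Q].
Qed.

Section Distribution.
Local Open Scope ring_scope.
Variables (R : realFieldType) (I : finType) (p : I -> R).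
Hypothesis p_distr : distribution p.

Lemma distribution_sum_setI (S1 S2 : {set I}) :
  \sum_(i in S1) p i + \sum_(i in S2) p i - 1 <= \sum_(i in S1 :&: S2) p i.
Proof.
case: p_distr => p_ge0 <-.
rewrite !(big_mkcond (fun i => i \in _)) -big_split -sumrB /=.
apply: ler_sum => i _; rewrite inE; have := p_ge0 i.
by case: (i \in S1); case: (i \in S2) => /=; lra.
Qed.

Lemma distribution_sum_subset (S : {set I}) (P : pred I) :
  (forall i, i \in S -> P i) -> \sum_(i in S) p i <= \sum_(i | P i) p i.
Proof.
case: p_distr => p_ge0 _ SP; rewrite big_mkcond [leRHS]big_mkcond /=.
apply: ler_sum => i _; case: (boolP (i \in S)) => [/SP -> // | _].
by case: (P i).
Qed.

Lemma distribution_exists_large (E : finType) (B : I -> {set E}) (A : {set E}) (q : R) :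
  (forall e, e \in A -> q <= \sum_(i | e \in B i) p i) ->
  exists i, q * #|A|%:R <= #|B i|%:R.
Proof.
case: p_distr => p_ge0 p_sum1 massB.
have [i0 _ | I_empty] := pickP I; last first.
  by move: p_sum1; rewrite big_pred0 // => /eqP; rewrite eq_sym oner_eq0.
have [imax _ maxB] := @arg_maxnP I i0 predT (fun i => #|B i|) isT.
exists imax; rewrite mulr_natr -sumr_const; apply: le_trans (ler_sum _ massB) _.
have drop_A : \sum_(e in A) \sum_(i | e \in B i) p i <= \sum_e \sum_(i | e \in B i) p i.
  by rewrite [leLHS]big_mkcond; apply: ler_sum => e _; case: ifP => // _; exact: sumr_ge0.
apply: le_trans drop_A _; rewrite (exchange_big_dep predT) //=.
have -> : #|B imax|%:R = \sum_i p i * #|B imax|%:R :> R by rewrite -mulr_suml p_sum1 mul1r.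
apply: ler_sum => i _; rewrite sumr_const -(mulr_natr (p i)).
by apply: ler_wpM2l => //; rewrite ler_nat; exact: maxB.
Qed.

End Distribution.

Lemma card_offdiag (T : finType) :
  #|[set e : T * T | e.1 != e.2]| = (#|T| * #|T| - #|T|)%N.
Proof.
have compl : ~: [set e : T * T | e.1 == e.2] = [set e | e.1 != e.2].
  by apply/setP=> e; rewrite !inE.
have diag : [set e : T * T | e.1 == e.2] = [set (x, x) | x in T].
  apply/setP=> -[a b]; rewrite inE /=.
  by apply/eqP/imsetP=> [-> | [x _ [-> ->]]]; first exists b.
have := cardsC [set e : T * T | e.1 == e.2].
by rewrite compl {1}diag card_imset ?card_prod => [<-|x y []]; rewrite ?addKn.
Qed.

Definition empty_graph n : rel 'I_n := fun _ _ => false.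

Definition edge_graph n (u v : 'I_n) : rel 'I_n :=
  fun a b => ((a == u) && (b == v)) || ((a == v) && (b == u)).

Lemma empty_graph_simple n : simple_graph (@empty_graph n).
Proof. by []. Qed.

Lemma edge_graph_simple n (u v : 'I_n) : u != v -> simple_graph (edge_graph u v).
Proof.
move=> uv; split=> [a b | a].
  by rewrite /edge_graph orbC andbC [in X in _ || X]andbC.
by apply/negbTE; apply/orP=> -[] /andP[/eqP-> /eqP E]; rewrite E eqxx in uv.
Qed.

Lemma max_pc_size_empty_graph n rho : is_max_pc_size (@empty_graph n) rho -> rho = 0%N.
Proof.
case=> -[P [/andP[/allP pathP _] <-]] _.
rewrite /pc_size big1_seq // => p /andP[_ /pathP].
by case: p => [|x [|y s]].
Qed.

Lemma max_pc_size_edge_graph_gt0 n (u v : 'I_n) rho :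
  u != v -> is_max_pc_size (edge_graph u v) rho -> (0 < rho)%N.
Proof.
move=> uv [_ maxP]; have := maxP [:: [:: u; v]]; rewrite /pc_size big_seq1; apply.
by rewrite /path_cover /= /simple_path /= /edge_graph !eqxx /= inE uv.
Qed.

Fixpoint empty_queries (R : Type) n (t : dtree R n) : seq ('I_n * 'I_n) :=
  if t is Query u v _ f then (u, v) :: empty_queries f else [::].

Lemma size_empty_queries R n (t : dtree R n) :
  size (empty_queries t) = num_queries (@empty_graph n) t.
Proof. by elim: t => //= u v t1 _ f ->. Qed.

Lemma run_empty_graph R n (G : rel 'I_n) (t : dtree R n) :
  {in empty_queries t, forall e, G e.1 e.2 = false} -> run G t = run (@empty_graph n) t.
Proof.
elim: t => //= u v t1 _ f IHf noG.
by rewrite (noG (u, v)) ?mem_head // IHf // => e fe; apply: noG; rewrite inE fe orbT.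
Qed.

Definition queried_pairs (R : Type) n (t : dtree R n) : {set 'I_n * 'I_n} :=
  [set e | (e \in empty_queries t) || ((e.2, e.1) \in empty_queries t)].

Lemma card_queried_pairs R n (t : dtree R n) :
  (#|queried_pairs t| <= 2 * num_queries (@empty_graph n) t)%N.
Proof.
pose s := empty_queries t ++ [seq (e.2, e.1) | e <- empty_queries t].
have sizes : size s = (2 * num_queries (@empty_graph n) t)%N.
  by rewrite size_cat size_map size_empty_queries addnn mul2n.
rewrite -sizes; apply: leq_trans (card_size s); apply: subset_leq_card.
apply/subsetP=> -[a b]; rewrite inE mem_cat /= => /orP[-> // | ba].
by apply/orP; right; apply/mapP; exists (b, a).
Qed.

Lemma good_estimates_query_edge (R : realFieldType) (gamma : R) n (t : dtree R n)
    (u v : 'I_n) :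
  (0 < gamma)%R -> u != v ->
  good_estimate gamma (@empty_graph n) (run (@empty_graph n) t) ->
  good_estimate gamma (edge_graph u v) (run (edge_graph u v) t) ->
  (u, v) \in queried_pairs t.
Proof.
move=> gamma_gt0 uv good0 good_uv; rewrite inE /=; apply: contraT.
rewrite negb_or => /andP[uv_unasked vu_unasked].
have same_run : run (edge_graph u v) t = run (@empty_graph n) t.
  apply: run_empty_graph => -[a b] ab /=; apply/negbTE/orP.
  by case=> /andP[/eqP Ea /eqP Eb]; move: ab; rewrite Ea Eb; apply/negP.
have [rho0 max0] := max_pc_size_exists (@empty_graph n).
have [rho max_uv] := max_pc_size_exists (edge_graph u v).
have [_ run_le0] := good0 _ max0; rewrite (max_pc_size_empty_graph max0) in run_le0.
have [run_ge _] := good_uv _ max_uv; rewrite same_run in run_ge.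
have : (0 < gamma * rho%:R)%R.
  by rewrite mulr_gt0 // ltr0n (max_pc_size_edge_graph_gt0 uv max_uv).
lra.
Qed.

Lemma edge_query_mass (R : realFieldType) (gamma : R) n (I : finType)
    (T : I -> dtree R n) (p : I -> R) :
  (0 < gamma)%R -> distribution p ->
  (forall G, simple_graph G -> succeeds_with_prob gamma (2%:R / 3%:R)%R T p G) ->
  forall u v : 'I_n, u != v ->
  (1 / 3%:R <= \sum_(i | (u, v) \in queried_pairs (T i)) p i)%R.
Proof.
move=> gamma_gt0 p_distr succeeds u v uv.
have [S0 [good0 mass0]] := succeeds _ (@empty_graph_simple n).
have [Se [good_uv mass_uv]] := succeeds _ (edge_graph_simple uv).
apply: le_trans (distribution_sum_subset p_distr (S := S0 :&: Se) _); last first.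
  move=> i; rewrite inE => /andP[i0 iuv].
  exact: good_estimates_query_edge gamma_gt0 uv (good0 i i0) (good_uv i iuv).
by apply: le_trans (distribution_sum_setI p_distr S0 Se); lra.
Qed.

Theorem lemma11p7 (R : realFieldType) (gamma : R) :
  (0 < gamma)%R -> (gamma <= 1)%R ->
  exists c : R, (0 < c)%R /\
  exists N : nat, forall n : nat, (N <= n)%N ->
  forall (I : finType) (T : I -> dtree R n) (p : I -> R),
    distribution p ->
    (forall G : rel 'I_n, simple_graph G ->
       succeeds_with_prob gamma (2%:R / 3%:R)%R T p G) ->
    exists (G : rel 'I_n) (i : I), simple_graph G /\
      (c * (n ^ 2)%:R <= (num_queries G (T i))%:R)%R.
Proof.
move=> gamma_gt0 _; exists (1 / 12%:R)%R; split; first lra.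
exists 2%N => n n_ge2 I T p p_distr succeeds.
pose offdiag := [set e : 'I_n * 'I_n | e.1 != e.2].
have mass e : e \in offdiag -> (1 / 3%:R <= \sum_(i | e \in queried_pairs (T i)) p i)%R.
  case: e => u v; rewrite inE /= => uv.
  exact: (edge_query_mass gamma_gt0 p_distr succeeds uv).
have [i large] := distribution_exists_large p_distr mass.
exists (@empty_graph n), i; split; first exact: empty_graph_simple.
have few_pairs := card_queried_pairs (T i).
rewrite card_offdiag card_ord in large.
set Q := num_queries _ (T i) in few_pairs *.
have pairs_le : (n * n - n <= 6 * Q)%N.
  by move: few_pairs; rewrite -!(ler_nat R) !natrM; lra.
have : (n ^ 2 <= 12 * Q)%N by nia.
by rewrite -(ler_nat R) natrM; lra.
Qed.
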